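(* Let $\nu$ be a measure on $\mathbb{R}^d$ with $\nu(\{0\})=0$. Then $\nu\in\mathfrak{M}_L^2(\mathbb{R}^d)$ if and only if $\nu^{(2)}\in\mathfrak{M}_L^1(\mathbb{R}^d)$, and in this case $\mathcal{A}_2(\nu)=\mathcal{A}_1(\nu^{(2)})$. Also $\nu\in\mathfrak{M}_L^1(\mathbb{R}^d)$ if and only if $\nu^{(1/2)}\in\mathfrak{M}_L^2(\mathbb{R}^d)$, and in this case $\mathcal{A}_1(\nu)=\mathcal{A}_2(\nu^{(1/2)})$.
   Context: A Lévy measure on $\mathbb{R}^d$ is a measure $\nu$ with $\nu(\{0\})=0$ and $\int(1\wedge|x|^2)\nu(\mathrm{d}x)<\infty$; their class is $\mathfrak{M}_L^2(\mathbb{R}^d)$, and $\mathfrak{M}_L^1(\mathbb{R}^d)$ is the class of Lévy measures with $\int(1\wedge|x|)\nu(\mathrm{d}x)<\infty$. For $s>0$ set $a_1(r;s)=2\pi^{-1}(s-r^2)^{-1/2}$ for $0<r<s^{1/2}$ and $0$ otherwise; $a_2(r;s)=2\pi^{-1}(s^2-r^2)^{-1/2}$ for $0<r<s$ and $0$ otherwise. For a measure $\nu$ on $\mathbb{R}^d$ with $\nu(\{0\})=0$ and $k=1,2$, $\mathcal{A}_k(\nu)(B)=\int_{\mathbb{R}^d\setminus\{0\}}\nu(\mathrm{d}x)\int_0^\infty a_k(r;|x|)1_B(rx/|x|)\,\mathrm{d}r$, $B$ Borel. For $p>0$, the $(p)$-transformation of such $\nu$ is the measure $\nu^{(p)}(B)=\int_{\mathbb{R}^d\setminus\{0\}}1_B(|x|^p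 x/|x|)\,\nu(\mathrm{d}x)$. *)

(* R^d is modelled as [d.-tuple R] with its canonical
   product (= Borel) sigma-algebra from measurable_structure.v. *)
From HB Require Import structures.
From mathcomp Require Import all_boot all_order all_algebra.
From mathcomp Require Import all_classical all_reals all_analysis.
Set Implicit Arguments. Unset Strict Implicit. Unset Printing Implicit Defensive.
Import Order.TTheory GRing.Theory Num.Theory.
Local Open Scope classical_set_scope.
Local Open Scope ring_scope.

Section levy_defs.
Context {R : realType} {d : nat}.
Local Notation V := (d.-tuple R).

Definition vzero : V := [tuple (0 : R) | _ < d].
Definition vnorm (x : V) : R := Num.sqrt (\sum_(i < d) (tnth x i) ^+ 2).
Definition vscale (c : R) (x : V) : V := [tuple c * tnth x i | i < d].

Definition levy2 (nu : set V -> \bar R) : Prop :=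
  nu [set vzero] = 0%E /\
  (\int[nu]_x (Num.min 1 (vnorm x ^+ 2))%:E < +oo)%E.
Definition levy1 (nu : set V -> \bar R) : Prop :=
  levy2 nu /\ (\int[nu]_x (Num.min 1 (vnorm x))%:E < +oo)%E.

Definition ptransform (p : R) (nu : set V -> \bar R) : set V -> \bar R :=
  fun B => nu (~` [set vzero] `&`
               [set x | B (vscale (vnorm x `^ p / vnorm x) x)]).

Definition a1 (r s : R) : R :=
  if (0 < r) && (r < Num.sqrt s) then 2 / pi * (Num.sqrt (s - r ^+ 2))^-1
  else 0.
Definition a2 (r s : R) : R :=
  if (0 < r) && (r < s) then 2 / pi * (Num.sqrt (s ^+ 2 - r ^+ 2))^-1
  else 0.

Definition Atrans (a : R -> R -> R) (nu : set V -> \bar R) (B : set V)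
  : \bar R :=
  (\int[nu]_(x in ~` [set vzero])
     \int[lebesgue_measure]_(r in `[0%R, +oo[)
        (a r (vnorm x) * \1_B (vscale (r / vnorm x) x))%:E)%E.
Definition A1 := Atrans a1.
Definition A2 := Atrans a2.
End levy_defs.

From HB Require Import structures.
From mathcomp Require Import all_boot all_order all_algebra.
From mathcomp Require Import all_classical all_reals all_analysis.
Import Order.TTheory GRing.Theory Num.Theory.
Local Open Scope classical_set_scope.
Local Open Scope ring_scope.

(* The (p)-transform of nu is the image of nu restricted to R^d \ {0} under
   the radial map x |-> |x|^p x/|x|, a bimeasurable bijection of R^d \ {0}
   whose inverse is the (1/p)-map and which preserves the direction x/|x|.
   Hence integrating a nonnegative function against nu^(p) is integrating its
   composite with the radial map against nu, also for integrands not known to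
   be measurable such as the inner integrals of A_k; this replaces |x| by
   |x|^p.  With p = 2 and
   p = 1/2 the two Levy integrability conditions are exchanged (the extra
   condition of M_L^1 follows from min(1, t^2) <= min(1, t)) and the kernels
   match: a_1(r; s^2) = a_2(r; s), a_2(r; sqrt s) = a_1(r; s). *)

Section sintegral_pushforward.
Local Open Scope ereal_scope.
Context d d' (X : measurableType d) (Y : measurableType d') (R : realType).

Lemma sintegral_pushforward_mrestr (mu : set X -> \bar R) (D : set X)
    (mD : measurable D) (phi : X -> Y) (h : Y -> R) :
  sintegral (pushforward (mrestr mu mD) phi) h =
  sintegral mu (patch (fun=> 0%R) D (h \o phi)).
Proof.
apply: eq_fsbigr => r _; have [->|r0] := eqVneq r 0%R; first by rewrite !mul0e.
congr (_ * mu _); apply/seteqP; split => x /=.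
  by move=> [hx Dx]; rewrite patchT ?inE.
rewrite /patch; case: ifPn => [/[!inE] Dx hx|_ r0E]; first by split.
by move: r0; rewrite -r0E eqxx.
Qed.

Import HBNNSimple.

Definition comp_nnsfun (h : {nnsfun Y >-> R}) (g : X -> Y)
    (mg : measurable_fun setT g) : {nnsfun X >-> R} :=
  HB.pack (h \o g)
    (isMeasurableFun.Build _ _ _ _ (h \o g) (measurableT_comp (measurable_funPT h) mg))
    (@FiniteImage.Build X R (h \o g)
       (sub_finite_set (fun _ '(ex_intro2 x _ e) => ex_intro2 _ _ (g x) I e) (fimfunP h)))
    (@isNonNegFun.Build X R (h \o g) (fun x => fun_ge0 (g x))).

End sintegral_pushforward.
Arguments comp_nnsfun {d d' X Y R}.

Section integral_pushforward_mrestr.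
Local Open Scope ereal_scope.
Context d (X : measurableType d) (R : realType).
Variables (mu : {measure set X -> \bar R}) (D : set X) (mD : measurable D).
Variables (phi psi : X -> X).
Hypotheses (mphi : measurable_fun setT phi) (mpsi : measurable_fun setT psi).
Hypotheses (phiK : cancel phi psi) (psiK : cancel psi phi).
Hypothesis phiD : forall x, D (phi x) <-> D x.

Import HBNNSimple.

(* no measurability of [f] is needed: both sides are suprema over simple
   minorants, which correspond to each other under composition with [phi] *)
Lemma ge0_integral_pushforward_mrestr (f : X -> \bar R) :
    (forall x, D x -> 0 <= f x) ->
  \int[pushforward (mrestr mu mD) phi]_(y in D) f y = \int[mu]_(x in D) f (phi x).
Proof.
move=> f0; have f0phi x : D x -> 0 <= f (phi x) by move=> /phiD/f0.
rewrite !ge0_integralE//; apply/eqP; rewrite eq_le; apply/andP; split.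
- apply: ge_ereal_sup => _ [h hf <-]; apply: ereal_sup_ubound => /=.
  exists (proj_nnsfun (comp_nnsfun h _ mphi) mD).
    move=> x; rewrite -mrestrict /patch; case: ifPn => [/[!inE] Dx|_] //=.
    by have := hf (phi x); rewrite /patch ifT // inE phiD.
  by rewrite -mrestrict sintegral_pushforward_mrestr.
- apply: ge_ereal_sup => _ [g gf <-]; apply: ereal_sup_ubound => /=.
  have g0 x : ~ D x -> g x = 0%R.
    move=> Dx; apply/eqP; rewrite eq_le fun_ge0 andbT -lee_fin.
    by have := gf x; rewrite /patch ifN // notin_setE.
  exists (comp_nnsfun g _ mpsi).
    move=> y; have psiD : (psi y \in D) = (y \in D).
      by rewrite -{2}(psiK y); apply/idP/idP; rewrite !in_setE => /phiD.
    have := gf (psi y); rewrite /patch /= psiD psiK.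
    by case: ifPn => // /[!inE] Dy _; rewrite g0 // -phiD psiK.
  rewrite sintegral_pushforward_mrestr; apply: eq_sintegral => x /=.
  by rewrite /patch /= phiK; case: ifPn => // /negP; rewrite in_setE => /g0 ->.
Qed.

End integral_pushforward_mrestr.

Section ge0_le_integralT.
Local Open Scope ereal_scope.
Context {d} {T : measurableType d} {R : realType}.
Variable mu : {measure set T -> \bar R}.

(* unlike [ge0_le_integral], no measurability is required *)
Lemma ge0_le_integralT (f g : T -> \bar R) : (forall x, 0 <= f x) ->
  (forall x, f x <= g x) -> \int[mu]_x f x <= \int[mu]_x g x.
Proof.
move=> f0 fg; rewrite !ge0_integralTE // => [|x]; last exact: le_trans (fg x).
apply: ereal_sup_le => _ [h hf <-]; exists h => // x; exact: le_trans (fg x).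
Qed.

End ge0_le_integralT.

Lemma integral_setC1 {d} {T : measurableType d} {R : realType}
    (mu : set T -> \bar R) (a : T) (f : T -> \bar R) : f a = 0%E ->
  (\int[mu]_x f x = \int[mu]_(x in ~` [set a]) f x)%E.
Proof.
move=> fa0; rewrite /integral patch_setT (_ : f \_ _ = f) //; apply/funext => x.
by rewrite /patch; case: ifPn => // /negP; rewrite in_setE /= => /contrapT ->.
Qed.

Section vector_norm.
Context {R : realType} {n : nat}.
Local Notation V := (n.-tuple R).
Implicit Types (x : V) (c : R).

Lemma tnth_vscale c x i : tnth (vscale c x) i = c * tnth x i.
Proof. by rewrite tnth_mktuple. Qed.

Lemma tnth_vzero i : tnth (vzero : V) i = 0.
Proof. by rewrite tnth_mktuple. Qed.

Lemma vscale_vscale c c' x : vscale c (vscale c' x) = vscale (c * c') x.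
Proof. by apply: eq_from_tnth => i; rewrite !tnth_vscale mulrA. Qed.

Lemma vscale1 x : vscale 1 x = x.
Proof. by apply: eq_from_tnth => i; rewrite tnth_vscale mul1r. Qed.

Lemma vscale_vzero c : vscale c vzero = vzero :> V.
Proof. by apply: eq_from_tnth => i; rewrite tnth_vscale tnth_vzero mulr0. Qed.

Lemma vnorm_ge0 x : 0 <= vnorm x.
Proof. exact: sqrtr_ge0. Qed.

Lemma vnorm_vzero : vnorm (vzero : V) = 0.
Proof. by rewrite /vnorm big1 ?sqrtr0 // => i _; rewrite tnth_vzero expr0n. Qed.

Lemma vnorm_eq0 x : (vnorm x == 0) = (x == vzero).
Proof.
apply/idP/eqP => [|->]; last by rewrite vnorm_vzero.
rewrite sqrtr_eq0 => sum_le0; apply: eq_from_tnth => i; rewrite tnth_vzero.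
have sum0 : \sum_(i < n) tnth x i ^+ 2 = 0.
  by apply/eqP; rewrite eq_le sum_le0 sumr_ge0 // => j _; exact: sqr_ge0.
apply/eqP; rewrite -sqrf_eq0; apply/eqP.
by move/psumr_eq0P : sum0 => -> // j _; exact: sqr_ge0.
Qed.

Lemma vnorm_gt0 x : (0 < vnorm x) = (x != vzero).
Proof. by rewrite lt_neqAle vnorm_ge0 andbT eq_sym vnorm_eq0. Qed.

Lemma vnorm_vscale c x : vnorm (vscale c x) = `|c| * vnorm x.
Proof.
rewrite /vnorm (eq_bigr (fun i => c ^+ 2 * tnth x i ^+ 2)); last first.
  by move=> i _; rewrite tnth_vscale exprMn.
by rewrite -big_distrr /= sqrtrM ?sqr_ge0 // sqrtr_sqr.
Qed.

Lemma measurable_vnorm : measurable_fun setT (@vnorm R n).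
Proof.
apply: measurableT_comp.
  exact: measurable_realfun.continuous_measurable_fun (@sqrt_continuous R).
apply: measurable_sum => i; apply: measurable_realfun.measurable_funX.
exact: measurable_tnth.
Qed.

Lemma measurable_nonzero : measurable (~` [set vzero] : set V).
Proof.
apply: measurableC; rewrite (_ : [set vzero] = vnorm @^-1` [set 0]).
  by rewrite -[X in measurable X]setTI; exact: measurable_vnorm.
apply/seteqP; split => [x ->|x /eqP]; first exact: vnorm_vzero.
by rewrite /= vnorm_eq0 => /eqP.
Qed.

End vector_norm.

Section radial_pow.
Context {R : realType} {n : nat}.
Local Notation V := (n.-tuple R).
Implicit Types (x : V) (p : R).

Definition radial_pow p x : V := vscale (vnorm x `^ p / vnorm x) x.

Lemma radial_pow_vzero p : radial_pow p vzero = vzero.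
Proof. exact: vscale_vzero. Qed.

Lemma vnorm_radial_pow p x : p != 0 -> vnorm (radial_pow p x) = vnorm x `^ p.
Proof.
move=> p0; have [->|x0] := eqVneq x vzero.
  by rewrite radial_pow_vzero vnorm_vzero powR0.
rewrite vnorm_vscale ger0_norm ?divr_ge0 ?powR_ge0 ?vnorm_ge0 //.
by rewrite divfK // vnorm_eq0.
Qed.

Lemma radial_powK p : p != 0 -> cancel (radial_pow p) (radial_pow p^-1).
Proof.
move=> p0 x; have [->|x0] := eqVneq x vzero; first by rewrite !radial_pow_vzero.
have xn0 : vnorm x != 0 by rewrite vnorm_eq0.
rewrite [radial_pow p^-1 _]/radial_pow vnorm_radial_pow // -powRrM mulfV //.
rewrite powRr1 ?vnorm_ge0 // /radial_pow vscale_vscale mulrA divfK ?mulfV ?vscale1 //.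
by rewrite powR_eq0 negb_and xn0.
Qed.

Lemma radial_pow_eq0 p x : p != 0 -> (radial_pow p x == vzero) = (x == vzero).
Proof.
move=> p0; apply/eqP/eqP => [|->]; last exact: radial_pow_vzero.
by move=> /(congr1 (radial_pow p^-1)); rewrite radial_powK // radial_pow_vzero.
Qed.

Lemma measurable_radial_pow p : measurable_fun setT (radial_pow p).
Proof.
apply/measurable_fun_tnthP => i.
rewrite (_ : _ \o _ = fun x => vnorm x `^ p * vnorm x `^ (-1) * tnth x i).
  apply: measurable_realfun.measurable_funM; last exact: measurable_tnth.
  by apply: measurable_realfun.measurable_funM;
    apply: measurableT_comp (measurable_realfun.measurable_powR _) measurable_vnorm.
apply/funext => x /=; rewrite tnth_vscale.
by rewrite (_ : -1 = 1 *- 1) // powR_invn ?vnorm_ge0 ?expr1.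
Qed.

Lemma radial_pow_direction p x r : p != 0 -> x != vzero ->
  vscale (r / vnorm (radial_pow p x)) (radial_pow p x) = vscale (r / vnorm x) x.
Proof.
move=> p0 x0; have xn0 : 0 < vnorm x by rewrite vnorm_gt0.
rewrite vnorm_radial_pow // /radial_pow vscale_vscale mulrA mulfVK //.
by rewrite gt_eqF // powR_gt0.
Qed.

End radial_pow.

Section ptransform.
Context {R : realType} {n : nat}.
Local Notation V := (n.-tuple R).
Variable nu : {measure set V -> \bar R}.
Implicit Types (p : R) (B : set V).

Lemma ptransformE p :
  ptransform p nu = pushforward (mrestr nu measurable_nonzero) (radial_pow p).
Proof. by apply/funext => B; rewrite /ptransform /pushforward /mrestr setIC. Qed.

Lemma ptransform_vzero p : p != 0 -> ptransform p nu [set vzero] = 0%E.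
Proof.
move=> p0; rewrite ptransformE /pushforward /mrestr.
rewrite (_ : _ `&` _ = set0) ?measure0 //; apply/seteqP; split => x //= [].
by move/eqP; rewrite radial_pow_eq0 // => /eqP.
Qed.

Lemma ge0_integral_ptransform p (f : V -> \bar R) : p != 0 ->
    (forall x, x != vzero -> (0 <= f x)%E) ->
  (\int[ptransform p nu]_(x in ~` [set vzero]) f x =
   \int[nu]_(x in ~` [set vzero]) f (radial_pow p x))%E.
Proof.
move=> p0 f0; rewrite ptransformE; apply: ge0_integral_pushforward_mrestr.
- exact: measurable_radial_pow.
- exact: (measurable_radial_pow p^-1).
- exact: radial_powK.
- by rewrite -{2}(invrK p); apply: radial_powK; rewrite invr_eq0.
- by move=> x /=; have := radial_pow_eq0 p x p0; do 2 case: eqP.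
- by move=> x /eqP; exact: f0.
Qed.

Lemma integral_ptransform_vnorm p (g : R -> R) : p != 0 -> g 0 = 0 ->
    (forall t, 0 <= t -> 0 <= g t) ->
  (\int[ptransform p nu]_x (g (vnorm x))%:E =
   \int[nu]_x (g (vnorm x `^ p))%:E)%E.
Proof.
move=> p0 g0 g_ge0.
rewrite (integral_setC1 _ vzero) /= ?vnorm_vzero ?g0 //.
rewrite [RHS](integral_setC1 _ vzero) /= ?vnorm_vzero ?powR0 ?g0 //.
rewrite ge0_integral_ptransform // => [|x _]; last by rewrite lee_fin g_ge0 ?vnorm_ge0.
by apply: eq_integral => x _; rewrite vnorm_radial_pow.
Qed.

Lemma Atrans_ptransform p (a b : R -> R -> R) B : p != 0 ->
    (forall r s, 0 <= a r s) -> (forall r s, 0 < s -> a r (s `^ p) = b r s) ->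
  Atrans a (ptransform p nu) B = Atrans b nu B.
Proof.
move=> p0 a_ge0 ab; rewrite /Atrans ge0_integral_ptransform //; last first.
  by move=> x _; apply: integral_ge0 => r _; rewrite lee_fin mulr_ge0.
apply: eq_integral => x /[!inE] /eqP x0; apply: eq_integral => r _.
by rewrite radial_pow_direction // vnorm_radial_pow // ab // vnorm_gt0.
Qed.

End ptransform.

Section kernels.
Context {R : realType}.
Implicit Types r s : R.

Lemma a1_ge0 r s : 0 <= a1 r s.
Proof.
by rewrite /a1; case: ifP => // _; rewrite mulr_ge0 ?invr_ge0 ?sqrtr_ge0 ?divr_ge0 ?pi_ge0.
Qed.

Lemma a2_ge0 r s : 0 <= a2 r s.
Proof.
by rewrite /a2; case: ifP => // _; rewrite mulr_ge0 ?invr_ge0 ?sqrtr_ge0 ?divr_ge0 ?pi_ge0.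
Qed.

Lemma a1_sqr r s : 0 <= s -> a1 r (s ^+ 2) = a2 r s.
Proof. by move=> s0; rewrite /a1 /a2 sqrtr_sqr ger0_norm. Qed.

Lemma a2_sqrt r s : 0 <= s -> a2 r (Num.sqrt s) = a1 r s.
Proof. by move=> s0; rewrite /a1 /a2 sqr_sqrtr. Qed.

End kernels.

Section min1.
Context {R : realType}.
Implicit Types t : R.

Lemma min1_0 : Num.min 1 0 = 0 :> R.
Proof. by rewrite minEle ler10. Qed.

Lemma min1_ge0 t : 0 <= t -> 0 <= Num.min 1 t.
Proof. by move=> t0; rewrite le_min ler01. Qed.

Lemma le_min1_sqr t : 0 <= t -> Num.min 1 (t ^+ 2) <= Num.min 1 t.
Proof.
move=> t0; rewrite le_min ge_min lexx /= ge_min.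
have [//|t1] := leP 1 t.
by rewrite expr2 ler_piMl // ltW.
Qed.

End min1.

Section levy_ptransform.
Context {R : realType} {n : nat}.
Variable nu : {measure set (n.-tuple R) -> \bar R}.
Hypothesis nu0 : nu [set vzero] = 0%E.

Let two_neq0 : (2 : R) != 0. Proof. by rewrite pnatr_eq0. Qed.
Let half_neq0 : (2 : R)^-1 != 0. Proof. by rewrite invr_eq0. Qed.

Let min1_sqr0 : Num.min 1 (0 ^+ 2) = 0 :> R.
Proof. by rewrite expr0n min1_0. Qed.

Let min1_sqr_ge0 (t : R) : 0 <= t -> 0 <= Num.min 1 (t ^+ 2).
Proof. by move=> _; rewrite min1_ge0 ?sqr_ge0. Qed.

Lemma levy2_ptransform2 : levy2 nu <-> levy1 (ptransform 2 nu).
Proof.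
have I1 : (\int[ptransform 2 nu]_x (Num.min 1 (vnorm x))%:E =
          \int[nu]_x (Num.min 1 (vnorm x ^+ 2))%:E)%E.
  rewrite (integral_ptransform_vnorm nu _ _ _ min1_0 min1_ge0) //.
  by apply: eq_integral => x _; rewrite powR_mulrn ?vnorm_ge0.
have I2 : (\int[ptransform 2 nu]_x (Num.min 1 (vnorm x ^+ 2))%:E =
          \int[nu]_x (Num.min 1 ((vnorm x ^+ 2) ^+ 2))%:E)%E.
  rewrite (integral_ptransform_vnorm nu _ _ _ min1_sqr0 min1_sqr_ge0) //.
  by apply: eq_integral => x _; rewrite powR_mulrn ?vnorm_ge0.
rewrite /levy1 /levy2 I1 I2 ptransform_vzero //.
split=> [[_ fin2]|[_ fin2]]; split=> //; split=> //.
apply: le_lt_trans fin2; apply: ge0_le_integralT => x; rewrite lee_fin.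
  exact/min1_sqr_ge0/sqr_ge0.
exact/le_min1_sqr/sqr_ge0.
Qed.

Lemma levy1_ptransform_half : levy1 nu <-> levy2 (ptransform 2^-1 nu).
Proof.
have I : (\int[ptransform 2^-1 nu]_x (Num.min 1 (vnorm x ^+ 2))%:E =
         \int[nu]_x (Num.min 1 (vnorm x))%:E)%E.
  rewrite (integral_ptransform_vnorm nu _ _ _ min1_sqr0 min1_sqr_ge0) //.
  by apply: eq_integral => x _; rewrite powR12_sqrt ?sqr_sqrtr ?vnorm_ge0.
rewrite /levy1 /levy2 I ptransform_vzero //.
split=> [[_ fin1] //|[_ fin1]]; split=> //; split=> //.
apply: le_lt_trans fin1; apply: ge0_le_integralT => x; rewrite lee_fin.
  exact/min1_sqr_ge0/vnorm_ge0.
exact/le_min1_sqr/vnorm_ge0.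
Qed.

Lemma A1_ptransform2 B : A1 (ptransform 2 nu) B = A2 nu B.
Proof.
apply: Atrans_ptransform => // [r s|r s s0]; first exact: a1_ge0.
by rewrite powR_mulrn ?a1_sqr ?ltW.
Qed.

Lemma A2_ptransform_half B : A2 (ptransform 2^-1 nu) B = A1 nu B.
Proof.
apply: Atrans_ptransform => // [r s|r s s0]; first exact: a2_ge0.
by rewrite powR12_sqrt ?a2_sqrt ?ltW.
Qed.

End levy_ptransform.

Theorem proposition2p5 (R : realType) (n : nat)
  (nu : {measure set (n.-tuple R) -> \bar R}) :
  nu [set vzero] = 0%E ->
  ((levy2 nu <-> levy1 (ptransform 2 nu)) /\
   (levy2 nu -> forall B : set (n.-tuple R), measurable B ->
      A2 nu B = A1 (ptransform 2 nu) B)) /\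
  ((levy1 nu <-> levy2 (ptransform (2^-1) nu)) /\
   (levy1 nu -> forall B : set (n.-tuple R), measurable B ->
      A1 nu B = A2 (ptransform (2^-1) nu) B)).
Proof.
move=> nu0; split; split.
- exact: levy2_ptransform2.
- by move=> _ B _; rewrite A1_ptransform2.
- exact: levy1_ptransform_half.
- by move=> _ B _; rewrite A2_ptransform_half.
Qed.
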